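(* Consider a weighted stochastic block model on vertex set $A\cup B$, where $A$ and $B$ are the two true communities, each of size $n$, and each pair $(i,j)$ receives an observed weight $w_{ij}$, drawn from $p_n$ if $i,j$ are in the same community and from $q_n$ otherwise. Let $d_n(x)=\log\frac{p_n(x)}{q_n(x)}$, and for disjoint vertex sets $\hat A,\hat B$ let $\mathcal S(\hat A,\hat B)=\sum_{i\in\hat A,\,j\in\hat B}d_n(w_{ij})$. If the maximum likelihood estimator of the community assignment does not coincide with the truth, then there exist an integer $1\le k\le\frac n2$ and sets $A_w\subset A$, $B_w\subset B$ with $|A_w|=|B_w|=k$ such that \[ \mathcal S(A_w,\bar A_w)+\mathcal S(B_w,\bar B_w)\le \mathcal S(A_w,\bar B_w)+\mathcal S(\bar A_w,B_w), \] where $\bar A_w=A\setminus A_w$ and $\bar B_w=B\setminus B_w$.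
   Context: $p_n$ and $q_n$ are mutually absolutely continuous (so that $d_n$ is well defined); they may be densities of continuous distributions or probability mass functions. *)

From HB Require Import structures.
From mathcomp Require Import all_boot all_order all_algebra.
From mathcomp Require Import reals exp.
Set Implicit Arguments. Unset Strict Implicit. Unset Printing Implicit Defensive.
Import Order.TTheory GRing.Theory Num.Theory.
Local Open Scope ring_scope.

(* Vertices are 'I_(n + n); a community assignment is given by the set [Ah]
   of vertices labelled "first community", the other community being [~: Ah]. *)

Section WSBM.
Variables (R : realType) (X : Type) (n : nat).
Variables (p q : X -> R) (w : 'I_(n + n) -> 'I_(n + n) -> X).

Definition dn (x : X) : R := ln (p x / q x).

Definition Sc (Ah Bh : {set 'I_(n + n)}) : R :=
  \sum_(i in Ah) \sum_(j in Bh) dn (w i j).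

Definition lik (Ah : {set 'I_(n + n)}) : R :=
  \prod_(i < n + n) \prod_(j < n + n | (i < j)%N)
     (if (i \in Ah) == (j \in Ah) then p (w i j) else q (w i j)).

Definition is_MLE (Ah : {set 'I_(n + n)}) : Prop :=
  #|Ah| = n /\ forall A' : {set 'I_(n + n)}, #|A'| = n -> lik A' <= lik Ah.

End WSBM.

From HB Require Import structures.
From mathcomp Require Import all_boot all_order all_algebra.
From mathcomp Require Import reals sequences exp.
From mathcomp Require Import ring zify.
Set Implicit Arguments. Unset Strict Implicit. Unset Printing Implicit Defensive.
Import Order.TTheory GRing.Theory Num.Theory.
Local Open Scope ring_scope.

(* [ln lik C] is a constant plus the sum of [d_ij] over the unordered pairs
   that [C] puts in the same community.  Going from the truth [A] to [C]
   swaps [Aw = A \ C] with [Bw = C \ A]: the pairs joining [Aw] or [Bw] to the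
   rest of its own true community get separated, those joining it to the rest
   of the other community get joined, and no other pair changes status.  So
   the log-likelihood gain of [C] over [A] is exactly the right-hand side
   minus the left-hand side of the inequality, nonnegative for an MLE.  As
   the likelihood is invariant under complementing [C], one of [C], [~: C]
   has [#|A \ C| <= n/2], and [#|A \ C| >= 1] because [C] is not [A]. *)

Lemma subn_le_half m k : (m./2 < k)%N -> (m - k <= m./2)%N.
Proof. by move=> lt_k; have := odd_double_half m; rewrite -addnn; lia. Qed.

Section SymmetricSums.
Variable V : zmodType.

Lemma sum_symmetrize (I : finType) (h : I -> I -> V) :
  \sum_i \sum_j (h i j + h j i) = (\sum_i \sum_j h i j) *+ 2.
Proof.
rewrite (eq_bigr (fun i => \sum_j h i j + \sum_j h j i)); last first.
  by move=> i _; rewrite big_split.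
by rewrite big_split /= [X in _ + X]exchange_big.
Qed.

Lemma sum_ord_pairs m (h : 'I_m -> 'I_m -> V) :
  (forall i j, h i j = h j i) -> (forall i, h i i = 0) ->
  \sum_(i < m) \sum_(j < m) h i j = (\sum_(i < m) \sum_(j < m | (i < j)%N) h i j) *+ 2.
Proof.
move=> h_sym h_diag; pose g (i j : 'I_m) := if (i < j)%N then h i j else 0.
have h_split (i j : 'I_m) : h i j = g i j + g j i.
  by rewrite /g; case: (ltngtP i j) => [_|_|/val_inj->]; rewrite ?addr0 ?add0r.
under eq_bigr do under eq_bigr do rewrite h_split.
rewrite sum_symmetrize; congr (_ *+ 2).
by apply: eq_bigr => i _; rewrite [RHS]big_mkcond.
Qed.

End SymmetricSums.

Section Cards.
Variables (T : finType) (A C : {set T}).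
Hypothesis card_AC : #|A| = #|C|.

Lemma cardsD_sym : #|A :\: C| = #|C :\: A|.
Proof. by rewrite !cardsD card_AC setIC. Qed.

Lemma cardsD_gt0 : C != A -> (0 < #|A :\: C|)%N.
Proof.
apply: contraNT; rewrite -eqn0Ngt cards_eq0 setD_eq0 => AC.
by rewrite eq_sym eqEcard AC card_AC leqnn.
Qed.

End Cards.

Lemma cardsDC (T : finType) (A C : {set T}) :
  #|A :\: ~: C| = (#|A| - #|A :\: C|)%N.
Proof. by rewrite setDE setCK -(cardsID C A) addnK. Qed.

Section WSBM.
Variables (R : realType) (X : Type) (n : nat).
Variables (p q : X -> R) (w : 'I_(n + n) -> 'I_(n + n) -> X).
Hypothesis w_sym : forall i j, w i j = w j i.
Hypothesis p_gt0 : forall i j, 0 < p (w i j).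
Hypothesis q_gt0 : forall i j, 0 < q (w i j).

Let d i j := dn p q (w i j).

Definition within_score (C : {set 'I_(n + n)}) : R :=
  \sum_(i < n + n) \sum_(j < n + n | (i < j)%N) ((i \in C) == (j \in C))%:R * d i j.

Lemma lik_expR C : lik p q w C =
  expR (\sum_(i < n + n) \sum_(j < n + n | (i < j)%N) ln (q (w i j)) + within_score C).
Proof.
rewrite /within_score -big_split expR_sum; apply: eq_bigr => i _.
rewrite -big_split expR_sum; apply: eq_bigr => j _ /=.
rewrite /d /dn ln_div ?posrE //.
by case: ifP => _; rewrite ?mul1r ?mul0r ?addr0 ?subrKC lnK ?posrE.
Qed.

Lemma within_score_le A C :
  lik p q w A <= lik p q w C -> within_score A <= within_score C.
Proof. by rewrite !lik_expR ler_expR lerD2l. Qed.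

Lemma Sc_indicator Y Z : Sc p q w Y Z =
  \sum_(i < n + n) \sum_(j < n + n) ((i \in Y) && (j \in Z))%:R * d i j.
Proof.
rewrite /Sc big_mkcond; apply: eq_bigr => i _; case: (i \in Y) => /=.
  by rewrite big_mkcond; apply: eq_bigr => j _; case: (j \in Z); rewrite ?mul1r ?mul0r.
by rewrite big1 // => j _; rewrite mul0r.
Qed.

Lemma within_score_swap A C :
  let Aw := A :\: C in let Bw := C :\: A in
  within_score C - within_score A =
    Sc p q w Aw (~: A :\: Bw) + Sc p q w (A :\: Aw) Bw
    - (Sc p q w Aw (A :\: Aw) + Sc p q w Bw (~: A :\: Bw)).
Proof.
move=> Aw Bw.
pose K i j : R :=
  ((i \in Aw) && (j \in ~: A :\: Bw))%:R + ((i \in A :\: Aw) && (j \in Bw))%:R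
  - (((i \in Aw) && (j \in A :\: Aw))%:R + ((i \in Bw) && (j \in ~: A :\: Bw))%:R).
have same_status_change i j :
    ((i \in C) == (j \in C))%:R - ((i \in A) == (j \in A))%:R = K i j + K j i.
  rewrite /K /Aw /Bw !inE.
  by case: (i \in A); case: (i \in C); case: (j \in A); case: (j \in C) => /=; ring.
have d_sym i j : d i j = d j i by rewrite /d w_sym.
apply: (@pmulrnI _ 2) => //.
rewrite -sumrB (eq_bigr (fun i : 'I_(n + n) => \sum_(j < n + n | (i < j)%N)
  (((i \in C) == (j \in C))%:R - ((i \in A) == (j \in A))%:R) * d i j)); last first.
  by move=> i _; rewrite -sumrB; apply: eq_bigr => j _; rewrite mulrBl.
rewrite -sum_ord_pairs; last 2 first.
- by move=> i j; rewrite d_sym eq_sym [(j \in A) == _]eq_sym.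
- by move=> i; rewrite !eqxx subrr mul0r.
under eq_bigr => i _ do under eq_bigr => j _ do
  rewrite same_status_change mulrDl [in K j i * _]d_sym.
rewrite sum_symmetrize; congr (_ *+ 2).
rewrite !Sc_indicator -!big_split -sumrB /=; apply: eq_bigr => i _.
rewrite -!big_split -sumrB /=; apply: eq_bigr => j _.
by rewrite /K mulrBl !mulrDl.
Qed.

Lemma lik_le_swap A C : lik p q w A <= lik p q w C ->
  Sc p q w (A :\: C) (A :\: (A :\: C)) + Sc p q w (C :\: A) (~: A :\: (C :\: A))
    <= Sc p q w (A :\: C) (~: A :\: (C :\: A)) + Sc p q w (A :\: (A :\: C)) (C :\: A).
Proof.
by move=> /within_score_le; rewrite -subr_ge0 (within_score_swap A C) subr_ge0.
Qed.

Lemma lik_setC C : lik p q w (~: C) = lik p q w C.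
Proof.
apply: eq_bigr => i _; apply: eq_bigr => j _.
by rewrite !inE; case: (i \in C); case: (j \in C).
Qed.

Lemma swap_witness (A C : {set 'I_(n + n)}) :
  #|A| = n -> #|C| = n -> C != A -> lik p q w A <= lik p q w C ->
  (#|A :\: C| <= n./2)%N ->
  exists k : nat, (1 <= k)%N /\ (k <= n./2)%N /\
  exists Aw Bw : {set 'I_(n + n)},
    [/\ Aw \subset A, Bw \subset ~: A, #|Aw| = k, #|Bw| = k &
     Sc p q w Aw (A :\: Aw) + Sc p q w Bw (~: A :\: Bw)
       <= Sc p q w Aw (~: A :\: Bw) + Sc p q w (A :\: Aw) Bw].
Proof.
move=> A_n C_n CA lik_AC small; have card_AC : #|A| = #|C| by rewrite A_n C_n.
exists #|A :\: C|; split; first exact: cardsD_gt0.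
split=> //; exists (A :\: C), (C :\: A); split.
- exact: subsetDl.
- by rewrite setDE setIC subsetIl.
- by [].
- exact: cardsD_sym.
- exact: lik_le_swap.
Qed.

End WSBM.

Theorem lemma1 (R : realType) (X : Type) (n : nat)
  (p q : X -> R) (w : 'I_(n + n) -> 'I_(n + n) -> X)
  (A : {set 'I_(n + n)}) :
  (forall i j, w i j = w j i) ->
  (forall i j, 0 < p (w i j)) ->
  (forall i j, 0 < q (w i j)) ->
  #|A| = n ->
  (exists Ah : {set 'I_(n + n)},
      is_MLE p q w Ah /\ Ah != A /\ Ah != ~: A) ->
  exists k : nat, (1 <= k)%N /\ (k <= n./2)%N /\
  exists Aw Bw : {set 'I_(n + n)},
    [/\ Aw \subset A, Bw \subset ~: A, #|Aw| = k, #|Bw| = k &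
     Sc p q w Aw (A :\: Aw) + Sc p q w Bw (~: A :\: Bw)
       <= Sc p q w Aw (~: A :\: Bw) + Sc p q w (A :\: Aw) Bw].
Proof.
move=> w_sym p_gt0 q_gt0 A_n [Ah [[Ah_n Ah_max] [Ah_A AhC_A]]].
have AhC_n : #|~: Ah| = n by rewrite cardsCs setCK card_ord Ah_n addnK.
case: (leqP #|A :\: Ah| n./2) => [small | large].
  exact: swap_witness (Ah_max A A_n) small.
apply: (swap_witness w_sym p_gt0 q_gt0 A_n AhC_n) => //.
- by apply: contraNneq AhC_A => <-; rewrite setCK.
- by rewrite lik_setC; exact: Ah_max A A_n.
- by rewrite cardsDC A_n subn_le_half.
Qed.
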